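(* Assume $|V|\ge 3$. Suppose the notion of strategic manipulation is modified by dropping the requirement that all colluders in $C$ have the same most preferred value in the type vector $\vec\theta$ of condition (b). Then there is no $(c,f)$-resilient consensus protocol for any $c\ge 2$. Moreover, if in addition condition (b) is strengthened to require that no colluder is worse off (in addition to some colluder being strictly better off), there is still no $(c,f)$-resilient consensus protocol for any $c\ge 2$ and $f\ge 1$.
   Context: Model. There are $n$ agents $\Pi=\{1,\dots,n\}$ proceeding in synchronous rounds $1,2,\dots$. In each round every agent first chooses, for each agent $j$, a message to send to $j$ or no message; then it receives the messages sent to it in that round; then it updates its local state. Channels are reliable. A failure pattern $F$ is a subset of $\{(i,j,r)\}$, where $(i,j,r)\in F$ means $i$'s round-$r$ message to $j$ would be delivered if sent; if $(i,j,r)\notin F$ then $(i,j',r')\notin F$ for all $j'$ and $r'>r$. Agent $i$ is correct if $(i,j,r)\in F$ for all $j,r$, faulty otherwise. In a system with at most $f$ crash failures only failure patterns with at most $f$ faulty agents occur. $V$ is a finite set of proposal values; the private type $\theta_i$ is a strict total order on $V$. A (deterministic) strategy $s_i$ maps $\theta_i$ to a function from (round $r$, messages received in rounds $1..r$) to (messages for round $r+1$, a decision in $V\cup\{\top\}$ or $\bot$), $\top\notin V$; each agent decides at most once. A protocol is a profile $\vec s$; the run $R(F,\vec\theta,\vec s)$ is determined. Legal profile: for every admissible $F$ and every $\vec\theta$: Termination (every correct agent eventually decides), Uniform Agreement (no two agents decide differently), Validity (any decision is an element of $V$ that is the most preferred value of some agent). Utility of $i$: $0$ if $i$ crashes in $F$;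 if consensus holds with decision $d$, a positive value strictly increasing in $i$'s preference for $d$; $-\infty$ if consensus is violated. Colluders $C$ may use strategies depending on all colluders' types. Original definition: $C$ can strategically manipulate a legal $\vec s$ if there is $\vec s'_C$ with (a) $(\vec s_{-C},\vec s'_C)$ legal, and (b) some admissible $F$ and some $\vec\theta$ in which all members of $C$ have the same most preferred value, such that some $i\in C$ has strictly higher utility under $(\vec s_{-C},\vec s'_C)$ than under $\vec s$. A $(c,f)$-resilient consensus protocol is a legal profile that no group of size at most $c$ can strategically manipulate, in a system with at most $f$ crash failures. *)

From Stdlib Require Import Reals.
From mathcomp Require Import all_boot.

Set Implicit Arguments.
Unset Strict Implicit.
Unset Printing Implicit Defensive.

(* [lt w v] means "v is strictly preferred to w".                      *)
Definition strict_total_order (V : eqType) (lt : rel V) : Prop :=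
  irreflexive lt /\ transitive lt /\ (forall x y, x != y -> lt x y || lt y x).

Definition Pref (V : eqType) := { lt : rel V | strict_total_order lt }.

Definition prefers (V : eqType) (th : Pref V) (v w : V) : bool := sval th w v.

Definition most_pref (V : eqType) (th : Pref V) (v : V) : Prop :=
  forall w, w != v -> prefers th v w.

(* Agents are 'I_n.  A message vector [msgs n M] is, for outgoing      *)
(* messages, indexed by the recipient (None = no message), and, for    *)
(* the messages received in one round, indexed by the sender (None =   *)
(* nothing received).  A history is the list of the message vectors    *)
(* received in rounds 1..r (its length is the current round r).        *)
Definition msgs (n : nat) (M : Type) := 'I_n -> option M.
Definition hist (n : nat) (M : Type) := seq (msgs n M).

(* NoDec = bottom (no decision now); DecTop = the special value top;
   DecVal v = decide v. *)
Inductive decision (V : Type) := NoDec | DecTop | DecVal of V.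
Arguments NoDec {V}.
Arguments DecTop {V}.

(* A (deterministic) strategy: given the private type, maps the history
   of received messages (rounds 1..r) to the messages for round r+1 and a
   decision (or bottom). *)
Definition strategy (n : nat) (M : Type) (V : eqType) :=
  Pref V -> hist n M -> msgs n M * decision V.

(* A generalized profile: agent i's behaviour may depend on the whole type
   vector (used for colluders, whose strategies may depend on all
   colluders' types). *)
Definition gprofile (n : nat) (M : Type) (V : eqType) :=
  'I_n -> ('I_n -> Pref V) -> hist n M -> msgs n M * decision V.

Definition of_strats n M (V : eqType) (s : 'I_n -> strategy n M V)
  : gprofile n M V := fun i th h => s i (th i) h.

Definition mix n M (V : eqType) (s : 'I_n -> strategy n M V) (C : {set 'I_n})
  (d : gprofile n M V) : gprofile n M V :=
  fun i th h => if i \in C then d i th h else s i (th i) h.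

Definition depends_only_on n M (V : eqType) (C : {set 'I_n}) (d : gprofile n M V)
  : Prop :=
  forall i th th', (forall j, j \in C -> th j = th' j) -> d i th = d i th'.

(* Failure patterns.  [F i j r] = i's round-r message to j would be    *)
(* delivered if sent (rounds are r >= 1).                              *)
Definition fpattern (n : nat) := 'I_n -> 'I_n -> nat -> bool.

Definition correct n (F : fpattern n) (i : 'I_n) : Prop :=
  forall j r, 0 < r -> F i j r.

Definition faulty n (F : fpattern n) (i : 'I_n) : Prop := ~ correct F i.

(* crash-failure pattern with at most f faulty agents *)
Definition admissible n (f : nat) (F : fpattern n) : Prop :=
  (forall i j r, 0 < r -> ~~ F i j r -> forall j' r', r < r' -> ~~ F i j' r')
  /\ exists S : {set 'I_n}, #|S| <= f /\ forall i, i \notin S -> correct F i.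

Fixpoint hists n M (V : eqType) (P : gprofile n M V) (F : fpattern n)
  (th : 'I_n -> Pref V) (r : nat) : 'I_n -> hist n M :=
  match r with
  | 0 => fun _ => [::]
  | r'.+1 => fun j =>
      rcons (hists P F th r' j)
            (fun i => if F i j r'.+1 then (P i th (hists P F th r' i)).1 j
                      else None)
  end.

Definition out_dec n M (V : eqType) (P : gprofile n M V) (F : fpattern n)
  (th : 'I_n -> Pref V) (i : 'I_n) (r : nat) : decision V :=
  (P i th (hists P F th r i)).2.

(* agent i has not crashed during rounds 1..r, so it takes its step at
   time r (outputs its round-(r+1) messages and its decision) *)
Definition alive n (F : fpattern n) (i : 'I_n) (r : nat) : Prop :=
  forall j r', 0 < r' <= r -> F i j r'.

(* Each agent decides at most once: its decision is the first non-bottom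
   decision it outputs while alive. *)
Definition decided n M (V : eqType) (P : gprofile n M V) (F : fpattern n)
  (th : 'I_n -> Pref V) (i : 'I_n) (d : decision V) : Prop :=
  d <> NoDec /\
  exists r, alive F i r /\ out_dec P F th i r = d /\
            forall r', r' < r -> out_dec P F th i r' = NoDec.

Definition consensus n M (V : eqType) (P : gprofile n M V) (F : fpattern n)
  (th : 'I_n -> Pref V) : Prop :=
  (forall i, correct F i -> exists d, decided P F th i d) /\
  (forall i j d d', decided P F th i d -> decided P F th j d' -> d = d') /\
  (forall i d, decided P F th i d ->
     exists v k, d = DecVal v /\ most_pref (th k) v).

Definition legal n M (V : eqType) (f : nat) (P : gprofile n M V) : Prop :=
  forall F th, admissible f F -> consensus P F th.

(* Utilities.  Values are in R extended with -oo (None = -oo).         *)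
Definition utility_ok n (V : eqType) (u : 'I_n -> Pref V -> V -> R) : Prop :=
  (forall i th v, Rlt R0 (u i th v)) /\
  (forall i th v w, prefers th v w -> Rlt (u i th w) (u i th v)).

Definition ult (x y : option R) : Prop :=
  match x, y with
  | None, Some _ => True
  | Some a, Some b => Rlt a b
  | _, _ => False
  end.

Definition ule (x y : option R) : Prop :=
  match x, y with
  | None, _ => True
  | Some a, Some b => Rle a b
  | Some _, None => False
  end.

Definition utility n M (V : eqType) (u : 'I_n -> Pref V -> V -> R)
  (P : gprofile n M V) (F : fpattern n) (th : 'I_n -> Pref V) (i : 'I_n)
  (x : option R) : Prop :=
  (faulty F i /\ x = Some R0) \/
  (correct F i /\ consensus P F th /\
     exists v, decided P F th i (DecVal v) /\ x = Some (u i (th i) v)) \/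
  (correct F i /\ ~ consensus P F th /\ x = None).

(* Strategic manipulation.  The flags select the variant:              *)
(*  same_top = true, no_worse = false : the original definition;       *)
(*  same_top = false                  : colluders need not share their *)
(*                                      most preferred value;          *)
(*  no_worse = true                   : additionally no colluder is    *)
(*                                      worse off.                     *)
Definition can_manipulate (same_top no_worse : bool) n M (V : eqType)
  (u : 'I_n -> Pref V -> V -> R) (f : nat) (s : 'I_n -> strategy n M V)
  (C : {set 'I_n}) : Prop :=
  exists d : gprofile n M V,
    depends_only_on C d /\
    (* (a) *) legal f (mix s C d) /\
    (* (b) *) exists F th,
      admissible f F /\
      (same_top -> exists v, forall i, i \in C -> most_pref (th i) v) /\
      (exists i, i \in C /\ exists x y,
          utility u (mix s C d) F th i x /\ utility u (of_strats s) F th i y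
          /\ ult y x) /\
      (no_worse -> forall j, j \in C -> exists x y,
          utility u (mix s C d) F th j x /\ utility u (of_strats s) F th j y
          /\ ule y x).

Definition resilient (same_top no_worse : bool) n M (V : eqType)
  (u : 'I_n -> Pref V -> V -> R) (c f : nat) (s : 'I_n -> strategy n M V)
  : Prop :=
  legal f (of_strats s) /\
  forall C : {set 'I_n}, #|C| <= c -> ~ can_manipulate same_top no_worse u f s C.

From Stdlib Require Import Reals Classical FunctionalExtensionality.
From mathcomp Require Import all_boot.

Set Implicit Arguments.
Unset Strict Implicit.
Unset Printing Implicit Defensive.

(* Fix two values x <> y and let the first k agents prefer x most and the
   others y.  In the failure-free run the decision is y for k = 0 and x for
   k = n (Validity), so some pivotal agent a turns the decision from y into
   x by switching its type.  Pair a with another agent b whose most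
   preferred value is the one a's switch moves away from: if a simply
   reports b's type, the joint run is an honest run of the protocol with a
   different type vector, so the deviation is legal, and b ends up strictly
   better off.  When nobody may be worse off, let a crash right after all
   relevant decisions have been taken: a then has utility 0 in both runs,
   while b's run is unchanged. *)

Section Runs.
Variables (n : nat) (M : Type) (V : eqType).
Implicit Types (P : gprofile n M V) (F : fpattern n) (th : 'I_n -> Pref V).

Lemma hists_congr P1 P2 F th1 th2 :
  (forall i, P1 i th1 = P2 i th2) ->
  forall r j, hists P1 F th1 r j = hists P2 F th2 r j.
Proof.
move=> eqP12; elim=> [|r IHr] j //=.
rewrite IHr; congr rcons; apply: functional_extensionality => i.
by rewrite IHr eqP12.
Qed.

Lemma decided_congr P1 P2 F th1 th2 i d :
  (forall i, P1 i th1 = P2 i th2) ->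
  decided P1 F th1 i d -> decided P2 F th2 i d.
Proof.
move=> eqP12 [nd [r [alive_r [dec_r before_r]]]]; split=> //; exists r.
have eq_out r' : out_dec P1 F th1 i r' = out_dec P2 F th2 i r'.
  by rewrite /out_dec (hists_congr F eqP12) eqP12.
by split=> //; split=> [|r' lt_r']; rewrite -eq_out //; apply: before_r.
Qed.

Lemma hists_prefix P F1 F2 th R :
  (forall i j r, 0 < r -> r <= R -> F1 i j r = F2 i j r) ->
  forall r j, r <= R -> hists P F1 th r j = hists P F2 th r j.
Proof.
move=> eqF; elim=> [|r IHr] j le_rR //=.
rewrite IHr ?(ltnW le_rR) //; congr rcons; apply: functional_extensionality => i.
by rewrite eqF // IHr // ltnW.
Qed.

Lemma utility_decided (u : 'I_n -> Pref V -> V -> R) P F th i v :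
  correct F i -> consensus P F th -> decided P F th i (DecVal v) ->
  utility u P F th i (Some (u i (th i) v)).
Proof. by move=> corr_i cons; right; left; split=> //; split=> //; exists v. Qed.

End Runs.

Definition no_failure {n} : fpattern n := fun _ _ _ => true.

Section Failures.
Variable n : nat.

Definition crash_after (a : 'I_n) (R : nat) : fpattern n :=
  fun i _ r => (i != a) || (r <= R).

Lemma admissible_no_failure f : admissible f (@no_failure n).
Proof. by split=> //; exists set0; rewrite cards0. Qed.

Lemma correct_crash_after a R i : i != a -> correct (crash_after a R) i.
Proof. by move=> ne_ia j r _; rewrite /crash_after ne_ia. Qed.

Lemma faulty_crash_after a R : faulty (crash_after a R) a.
Proof. by move=> corr_a; have := corr_a a R.+1 isT; rewrite /crash_after eqxx ltnn. Qed.

Lemma admissible_crash_after f a R : 0 < f -> admissible f (crash_after a R).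
Proof.
move=> f_gt0; split.
  move=> i j r _; rewrite negb_or negbK -ltnNge => /andP[/eqP-> lt_Rr] j' r' lt_rr'.
  by rewrite /crash_after eqxx -ltnNge (ltn_trans lt_Rr).
exists [set a]; rewrite cards1; split=> // i.
by rewrite inE; apply: correct_crash_after.
Qed.

Lemma decided_crash_late M (V : eqType) (P : gprofile n M V) th a i d :
  i != a -> decided P no_failure th i d ->
  exists R0, forall R, R0 <= R -> decided P (crash_after a R) th i d.
Proof.
move=> ne_ia [nd [r [_ [dec_r before_r]]]]; exists r => R le_rR.
have eq_out r' :
    r' <= R -> out_dec P (crash_after a R) th i r' = out_dec P no_failure th i r'.
  move=> le_r'R; rewrite /out_dec (@hists_prefix _ _ _ P _ no_failure th R) //.
  by move=> k j r'' _ le_r''R; rewrite /crash_after le_r''R orbT.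
split=> //; exists r; split.
  by move=> j r' /andP[r'_gt0 _]; apply: (correct_crash_after R ne_ia).
split; first by rewrite eq_out.
by move=> r' lt_r'r; rewrite eq_out ?before_r // ltnW // (leq_trans lt_r'r).
Qed.

End Failures.

Section Impersonation.
Variables (n : nat) (M : Type) (V : eqType) (f : nat).
Variables (u : 'I_n -> Pref V -> V -> R) (s : 'I_n -> strategy n M V).
Hypothesis hu : utility_ok u.
Hypothesis legal_s : legal f (of_strats s).
Variables a b : 'I_n.

Definition retype (th : 'I_n -> Pref V) : 'I_n -> Pref V :=
  fun i => if i == a then th b else th i.

Definition impersonate : gprofile n M V := fun i th => s i (th b).

Lemma mix_impersonate th i :
  mix s [set a; b] impersonate i th = of_strats s i (retype th).
Proof.
rewrite /mix /of_strats /impersonate /retype !inE.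
by case: (i =P a) => [->|_] //=; case: (i =P b) => [->|_].
Qed.

Lemma retype_eq th th' :
  (forall i, i != a -> th i = th' i) -> th' a = th b -> retype th = th'.
Proof.
move=> off_a at_a; apply: functional_extensionality => i; rewrite /retype.
by case: eqP => [->|/eqP /off_a].
Qed.

Lemma decided_impersonate F th i d :
  decided (mix s [set a; b] impersonate) F th i d <->
  decided (of_strats s) F (retype th) i d.
Proof.
by split; apply: decided_congr => k; rewrite mix_impersonate.
Qed.

Lemma legal_impersonate : legal f (mix s [set a; b] impersonate).
Proof.
move=> F th adm_F.
have [term [agree valid]] := legal_s (retype th) adm_F.
split; [|split].
- by move=> i /term[d /decided_impersonate dec_i]; exists d.
- move=> i j d d' /decided_impersonate dec_i /decided_impersonate dec_j.
  exact: agree dec_i dec_j.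
- move=> i d /decided_impersonate /valid[v [k [-> top_k]]].
  by exists v, (if k == a then b else k); move: top_k; rewrite /retype; case: (k == a).
Qed.

Lemma can_manipulate_of_runs (no_worse : bool) F th v v' :
  admissible f F -> correct F b -> (no_worse -> faulty F a) ->
  decided (of_strats s) F th b (DecVal v) ->
  decided (of_strats s) F (retype th) b (DecVal v') ->
  prefers (th b) v' v -> can_manipulate false no_worse u f s [set a; b].
Proof.
move=> adm_F corr_b faulty_a dec_b dec_b' pref_b.
have b_in : b \in [set a; b] by rewrite !inE eqxx orbT.
have cons_dev : consensus (mix s [set a; b] impersonate) F th :=
  legal_impersonate th adm_F.
have util_dev :=
  utility_decided u corr_b cons_dev (proj2 (decided_impersonate _ _ _ _) dec_b').
have util_honest := utility_decided u corr_b (legal_s th adm_F) dec_b.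
have better_b : Rlt (u b (th b) v) (u b (th b) v') by apply: hu.2.
exists impersonate; split; first by move=> i th1 th2 eq_C; rewrite /impersonate eq_C.
split; first exact: legal_impersonate.
exists F, th; do 3!split=> //.
  by exists b; split=> //; exists (Some (u b (th b) v')), (Some (u b (th b) v)).
move=> /faulty_a faulty_a' j; rewrite !inE => /orP[/eqP->|/eqP->].
  by exists (Some R0), (Some R0); split; [left | split; [left | apply: Rle_refl]].
exists (Some (u b (th b) v')), (Some (u b (th b) v)).
by split=> //; split=> //; apply: Rlt_le.
Qed.

Lemma can_manipulate_by_impersonation (no_worse : bool) th v v' :
  a != b -> (no_worse -> 0 < f) ->
  decided (of_strats s) no_failure th b (DecVal v) ->
  decided (of_strats s) no_failure (retype th) b (DecVal v') ->
  prefers (th b) v' v -> can_manipulate false no_worse u f s [set a; b].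
Proof.
move=> ne_ab f_pos dec_b dec_b' pref_b.
case: no_worse f_pos => [/(_ isT) f_gt0|_]; last first.
  exact: can_manipulate_of_runs (admissible_no_failure n f) _ _ dec_b dec_b' pref_b.
have ne_ba : b != a by rewrite eq_sym.
have [R1 late_b] := decided_crash_late ne_ba dec_b.
have [R2 late_b'] := decided_crash_late ne_ba dec_b'.
apply: (can_manipulate_of_runs (F := crash_after a (maxn R1 R2)))
  (late_b _ (leq_maxl _ _)) (late_b' _ (leq_maxr _ _)) pref_b.
- exact: admissible_crash_after.
- exact: correct_crash_after.
- by move=> _; apply: faulty_crash_after.
Qed.

End Impersonation.

Lemma most_pref_uniq (V : eqType) (th : Pref V) v w :
  most_pref th v -> most_pref th w -> v = w.
Proof.
case: th => lt sto top_v top_w; have [irr [trans _]] := sto.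
case: (eqVneq v w) => // ne_vw.
have ne_wv : w != v by rewrite eq_sym.
have := trans _ _ _ (top_v w ne_wv) (top_w v ne_vw).
by rewrite /prefers /= irr.
Qed.

Section TopPreference.
Variable V : finType.

Definition top_rank (x v : V) : nat := if v == x then 0 else (enum_rank v).+1.

Lemma top_rank_inj x : injective (top_rank x).
Proof.
move=> v w; rewrite /top_rank; case: eqP => [->|_]; case: eqP => [->|_] //.
by case=> /ord_inj /enum_rank_inj.
Qed.

Definition top_first (x : V) : rel V := fun w v => top_rank x v < top_rank x w.

Lemma strict_total_order_top_first x : strict_total_order (top_first x).
Proof.
split; first by move=> v; rewrite /top_first ltnn.
split; first by move=> v w z lt_wv lt_vz; apply: ltn_trans lt_vz lt_wv.
move=> v w ne_vw; rewrite /top_first.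
by case: ltngtP => // /top_rank_inj eq_wv; rewrite eq_wv eqxx in ne_vw.
Qed.

Definition pref_with_top (x : V) : Pref V :=
  exist _ (top_first x) (strict_total_order_top_first x).

Lemma most_pref_with_top x : most_pref (pref_with_top x) x.
Proof.
by move=> w /negbTE ne_wx; rewrite /prefers /= /top_first /top_rank eqxx ne_wx.
Qed.

End TopPreference.

Lemma exists_switch (D : nat -> Prop) n :
  D n -> ~ D 0 -> exists2 k, k < n & ~ D k /\ D k.+1.
Proof.
elim: n => [//|n IHn] D_n1 not_D0.
have [D_n|not_Dn] := classic (D n); last by exists n.
by have [k lt_kn switch_k] := IHn D_n not_D0; exists k; first exact: ltnW.
Qed.

Section Pivot.
Variables (V : finType) (n : nat) (M : Type) (f : nat) (s : 'I_n -> strategy n M V).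
Hypothesis legal_s : legal f (of_strats s).

Lemma decided_agree th i j d d' :
  decided (of_strats s) no_failure th i d -> decided (of_strats s) no_failure th j d' ->
  d = d'.
Proof. by have [_ [agree _]] := legal_s th (admissible_no_failure n f); apply: agree. Qed.

Lemma failure_free_decision th (i0 : 'I_n) :
  exists2 w, (forall i, decided (of_strats s) no_failure th i (DecVal w))
           & exists k, most_pref (th k) w.
Proof.
have [term [_ valid]] := legal_s th (admissible_no_failure n f).
have [d dec_i0] := term i0 (fun _ _ _ => isT).
have [w [k [def_d top_k]]] := valid _ _ dec_i0; subst d.
exists w; last by exists k.
move=> i; have [d dec_i] := term i (fun _ _ _ => isT).
by rewrite (decided_agree dec_i0 dec_i).
Qed.

Variables x y : V.
Hypothesis neq_xy : x != y.

Definition split_types (k : nat) : 'I_n -> Pref V :=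
  fun i => pref_with_top (if i < k then x else y).

Definition decides (k : nat) (w : V) : Prop :=
  forall i, decided (of_strats s) no_failure (split_types k) i (DecVal w).

Lemma decides_x_or_y k (i0 : 'I_n) : decides k x \/ decides k y.
Proof.
have [w dec_w [j]] := failure_free_decision (split_types k) i0.
rewrite /split_types; case: (j < k) => top_j.
  by left; rewrite -(most_pref_uniq top_j (@most_pref_with_top _ x)).
by right; rewrite -(most_pref_uniq top_j (@most_pref_with_top _ y)).
Qed.

Lemma decides_all_x (i0 : 'I_n) : decides n x.
Proof.
have [w dec_w [j]] := failure_free_decision (split_types n) i0.
rewrite /split_types ltn_ord => top_j.
by rewrite -(most_pref_uniq top_j (@most_pref_with_top _ x)).
Qed.

Lemma not_decides_none_x (i0 : 'I_n) : ~ decides 0 x.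
Proof.
move=> dec_x; have [w dec_w [j]] := failure_free_decision (split_types 0) i0.
rewrite /split_types ltn0 => top_j.
have eq_wy := most_pref_uniq top_j (@most_pref_with_top _ y).
case: (decided_agree (dec_x i0) (dec_w i0)) => eq_xw.
by move: neq_xy; rewrite eq_xw eq_wy eqxx.
Qed.

Lemma exists_pivot : 0 < n -> exists a : 'I_n, decides a y /\ decides a.+1 x.
Proof.
move=> n_gt0; pose i0 := Ordinal n_gt0.
have [k lt_kn [not_x_k x_k1]] :=
  @exists_switch (decides^~ x) n (decides_all_x i0) (not_decides_none_x i0).
exists (Ordinal lt_kn); split=> //=.
by case: (decides_x_or_y k i0).
Qed.

Lemma split_types_off_pivot (a i : 'I_n) :
  i != a -> split_types a i = split_types a.+1 i.
Proof.
move=> ne_ia; have neq_val : (i == a :> nat) = false by apply: negbTE.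
by rewrite /split_types ltnS [i <= a]leq_eqVlt neq_val.
Qed.

Variables (u : 'I_n -> Pref V -> V -> R) (hu : utility_ok u).

Lemma can_manipulate_pivot (no_worse : bool) (a b : 'I_n) :
  (no_worse -> 0 < f) -> a != b -> decides a y -> decides a.+1 x ->
  can_manipulate false no_worse u f s [set a; b].
Proof.
move=> f_pos ne_ab dec_y dec_x.
have pref_xy : prefers (pref_with_top x) x y by apply: most_pref_with_top; rewrite eq_sym.
have pref_yx : prefers (pref_with_top y) y x by apply: most_pref_with_top.
have [lt_ba|le_ab] := ltnP b a.
  have type_b : split_types a b = pref_with_top x by rewrite /split_types lt_ba.
  have retype_a : retype a b (split_types a) = split_types a.+1.
    apply: retype_eq => [i /split_types_off_pivot //|].
    by rewrite type_b /split_types ltnSn.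
  apply: (can_manipulate_by_impersonation hu legal_s) (dec_y b) _ _ => //.
    by rewrite retype_a; apply: dec_x.
  by rewrite type_b.
have type_b : split_types a.+1 b = pref_with_top y.
  by rewrite /split_types ltnS leqNgt ltn_neqAle le_ab andbT ne_ab.
have retype_a : retype a b (split_types a.+1) = split_types a.
  apply: retype_eq => [i /split_types_off_pivot -> //|].
  by rewrite type_b /split_types ltnn.
apply: (can_manipulate_by_impersonation hu legal_s) (dec_x b) _ _ => //.
  by rewrite retype_a; apply: dec_y.
by rewrite type_b.
Qed.

End Pivot.

Lemma not_resilient_of_two_values (V : finType) n M (u : 'I_n -> Pref V -> V -> R)
    (hu : utility_ok u) (no_worse : bool) c f (s : 'I_n -> strategy n M V) :
  1 < #|V| -> 1 < n -> 1 < c -> (no_worse -> 0 < f) ->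
  ~ resilient false no_worse u c f s.
Proof.
move=> /card_gt1P[x [y [_ _ neq_xy]]] n_gt1 c_gt1 f_pos [legal_s not_manip].
have [a [dec_y dec_x]] := exists_pivot legal_s neq_xy (ltnW n_gt1).
have [b ne_ab] : exists b : 'I_n, a != b.
  have /card_gt1P[i [j [_ _ ne_ij]]] : 1 < #|'I_n| by rewrite card_ord.
  by case: (eqVneq a i) => [->|]; [exists j | exists i].
apply: (not_manip [set a; b]); first by rewrite cards2 ne_ab.
exact: (can_manipulate_pivot legal_s neq_xy hu).
Qed.

Theorem proposition3 (V : finType) (hV : 3 <= #|V|) (n : nat) (hn : 2 <= n)
  (u : 'I_n -> Pref V -> V -> R) (hu : utility_ok u) :
  (forall (M : Type) (c f : nat), 2 <= c ->
     forall s : 'I_n -> strategy n M V, ~ resilient false false u c f s) /\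
  (forall (M : Type) (c f : nat), 2 <= c -> 1 <= f ->
     forall s : 'I_n -> strategy n M V, ~ resilient false true u c f s).
Proof.
split=> [M c f hc s | M c f hc hf s];
  by apply: not_resilient_of_two_values (ltnW hV) hn hc _.
Qed.
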